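(* Let $A$ be an associative (not necessarily unital) algebra over a field $F$, let $q\in F$ with $q\ne 1$, and let $\sigma\in S_n$ satisfy $\sigma(1)\neq 1$ and $\sigma(n)\neq n$. If $A$ satisfies the identity $x_1\cdots x_n=q\,x_{\sigma(1)}\cdots x_{\sigma(n)}$, then $A$ is eventually commutative, i.e. there is some $k$ such that $A$ satisfies $x_1\cdots x_k=x_{\tau(1)}\cdots x_{\tau(k)}$ for all $\tau\in S_k$.
   Context: An identity is satisfied by $A$ if it holds upon substituting arbitrary elements of $A$ for the variables. *)

From HB Require Import structures.
From mathcomp Require Import all_boot all_order all_algebra all_fingroup.
Set Implicit Arguments. Unset Strict Implicit. Unset Printing Implicit Defensive.
Import GRing.Theory.
Local Open Scope ring_scope.

Definition assoc_algebra_mul (F : fieldType) (A : lmodType F)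
    (mul : A -> A -> A) : Prop :=
  [/\ (forall x y z, mul x (mul y z) = mul (mul x y) z),
      (forall (a : F) x y z, mul (a *: x + y) z = a *: mul x z + mul y z)
    & (forall (a : F) x y z, mul x (a *: y + z) = a *: mul x y + mul x z)].

(* Product of a nonempty list, left to right: s_0 s_1 ... s_m
   (the empty product is set to 0; it is never used below). *)
Definition seqprod (A : Type) (zero : A) (mul : A -> A -> A) (s : seq A) : A :=
  if s is a :: t then foldl mul a t else zero.

Definition wordprod (F : fieldType) (A : lmodType F) (mul : A -> A -> A)
    (n : nat) (x : 'I_n -> A) : A :=
  seqprod 0 mul [seq x i | i <- enum 'I_n].

Definition satisfies_qperm_id (F : fieldType) (A : lmodType F)
    (mul : A -> A -> A) (n : nat) (q : F) (s : 'S_n) : Prop :=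
  forall x : 'I_n -> A, wordprod mul x = q *: wordprod mul (fun i => x (s i)).

Definition satisfies_all_perm_ids (F : fieldType) (A : lmodType F)
    (mul : A -> A -> A) (k : nat) : Prop :=
  forall (t : 'S_k) (x : 'I_k -> A), wordprod mul x = wordprod mul (fun i => x (t i)).

Definition eventually_commutative (F : fieldType) (A : lmodType F)
    (mul : A -> A -> A) : Prop :=
  exists N : nat, forall k : nat, (N <= k)%N -> satisfies_all_perm_ids mul k.

From Pilot Require Import Defs.
From HB Require Import structures.
From mathcomp Require Import all_boot all_order all_algebra all_fingroup.
From mathcomp Require Import zify.

Set Implicit Arguments.
Unset Strict Implicit.
Unset Printing Implicit Defensive.

Import GRing.Theory.

(* Since sigma(1) <> 1 there is p > 1 with sigma(p) = 1; put u = sigma(p-1).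
   The substitutions x_u |-> x_u y and x_1 |-> y x_1 give the same right-hand
   side, in which x_u x_1 occurs as a factor.  Comparing the left-hand sides,
   a letter y may jump from the front of a word of length n + 1 to just behind
   its u-th letter.  Inside words followed by at least n further letters this
   yields every transposition of adjacent letters, hence every permutation.
   Applying the identity to the first n letters of a word of length 2n then
   gives w = q w, so w = 0: A^(2n) = 0, which is more than eventual
   commutativity. *)

Section WordProducts.

Variables (T : eqType) (zero : T) (mul : T -> T -> T).
Local Notation prod := (Defs.seqprod zero mul).

Lemma prod_catr s r : s != [::] -> prod (s ++ r) = foldl mul (prod s) r.
Proof. by case: s => // a s _; rewrite /= foldl_cat. Qed.

Lemma prod_congr_catr s1 s2 r : s1 != [::] -> s2 != [::] ->
  prod s1 = prod s2 -> prod (s1 ++ r) = prod (s2 ++ r).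
Proof. by move=> ne1 ne2 E; rewrite !prod_catr // E. Qed.

Hypothesis mulA : forall x y z, mul x (mul y z) = mul (mul x y) z.

Lemma foldl_mulA x c r : foldl mul (mul x c) r = mul x (foldl mul c r).
Proof. by elim: r x c => [|d r IH] x c //=; rewrite -mulA IH. Qed.

Lemma prod_cat s1 s2 : s1 != [::] -> s2 != [::] ->
  prod (s1 ++ s2) = mul (prod s1) (prod s2).
Proof. by case: s2 => // b s2 ne1 _; rewrite prod_catr //= foldl_mulA. Qed.

Lemma prod_congr_catl l s1 s2 : s1 != [::] -> s2 != [::] ->
  prod s1 = prod s2 -> prod (l ++ s1) = prod (l ++ s2).
Proof. by case: l => [|a l] // ne1 ne2 E; rewrite !prod_cat // E. Qed.

Lemma prod_collapse L M R : M != [::] ->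
  prod (L ++ M ++ R) = prod (L ++ prod M :: R).
Proof.
move=> neM; rewrite -cat1s !catA.
have neLM : L ++ M != [::] by case: L => //; case: M neM.
by apply: prod_congr_catr => //; [case: (L) | apply: prod_congr_catl].
Qed.

Lemma prod_set_nth_mulr t j y : j < size t ->
  prod (set_nth zero t j (mul (nth zero t j) y)) =
  prod (take j.+1 t ++ y :: drop j.+1 t).
Proof.
move=> ltj; rewrite set_nthE ltj.
by rewrite -(@prod_collapse _ [:: nth zero t j; y]) // (take_nth zero ltj) cat_rcons.
Qed.

Lemma prod_set_nth_mull t j y : j < size t ->
  prod (set_nth zero t j (mul y (nth zero t j))) = prod (take j t ++ y :: drop j t).
Proof.
move=> ltj; rewrite set_nthE ltj.
by rewrite -(@prod_collapse _ [:: y; nth zero t j]) // (drop_nth zero ltj).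
Qed.

Section Jump.

Variables (n m : nat).
Hypotheses (m_gt0 : 0 < m) (m_le_n : m <= n).
Hypothesis prod_jump : forall y l, size l = n ->
  prod (y :: l) = prod (take m l ++ y :: drop m l).

Lemma prod_jump_cat y C R : m <= size C -> n - m <= size R ->
  prod (y :: C ++ R) = prod (C ++ y :: R).
Proof.
move=> leC leR.
have jump_exact C' : size C' = m -> prod (y :: C' ++ R) = prod (C' ++ y :: R).
  move=> szC'; rewrite -(cat_take_drop (n - m) R) catA -cat_cons.
  rewrite -[C' ++ y :: _]/(C' ++ (y :: _) ++ _) catA.
  apply: prod_congr_catr => //; first by case: (C').
  have := @prod_jump y (C' ++ take (n - m) R).
  rewrite take_size_cat // drop_size_cat //; apply.
  by rewrite size_cat size_takel // szC' subnKC.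
set k := (size C - m).+1.
have szk : size (take k C) = k by rewrite size_takel // /k; lia.
have neC : take k C != [::] by rewrite -size_eq0 szk.
rewrite -(cat_take_drop k C) -!catA -cat1s prod_collapse //.
rewrite -[X in _ = prod X]cat0s prod_collapse //.
apply: (jump_exact (prod (take k C) :: drop k C)).
by rewrite /= size_drop /k; lia.
Qed.

Lemma prod_swap L a b R : n <= size R ->
  prod (L ++ a :: b :: R) = prod (L ++ b :: a :: R).
Proof.
move=> leR; apply: prod_congr_catl => //.
rewrite -(cat_take_drop m R); set C := take m R; set R' := drop m R.
have szC : size C = m by rewrite size_takel // (leq_trans m_le_n).
have leR' : n - m <= size R' by rewrite size_drop; lia.
have leRx x : n - m <= size (x :: R') by rewrite /= (leq_trans leR').
have leC : m <= size C by rewrite szC.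
have leCx x : m <= size (x :: C) by rewrite /= szC.
transitivity (prod (C ++ b :: a :: R')).
  by rewrite (prod_jump_cat a (leCx b) leR') (prod_jump_cat b leC (leRx a)).
rewrite (prod_jump_cat b (leCx a) leR').
have leCb : m <= size (C ++ [:: b]) by rewrite size_cat szC leq_addr.
by have := prod_jump_cat a leCb leR'; rewrite -!catA => ->.
Qed.

Lemma prod_move L x M R : n <= size R ->
  prod (L ++ x :: M ++ R) = prod (L ++ M ++ x :: R).
Proof.
elim: M L => [|y M IH] L leR //=.
rewrite prod_swap; last by rewrite size_cat (leq_trans leR) // leq_addl.
by rewrite -cat_rcons IH // cat_rcons.
Qed.

Lemma prod_perm L W W' R : n <= size R -> perm_eq W W' ->
  prod (L ++ W ++ R) = prod (L ++ W' ++ R).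
Proof.
elim: W W' L => [|x W IH] W' L leR eqWW'.
  by case: W' eqWW' => // y W' /perm_size.
have xW' : x \in W' by rewrite -(perm_mem eqWW') mem_head.
case/splitPr: xW' eqWW' => W1 W2 eqWW'.
have eqW : perm_eq W (W1 ++ W2).
  by rewrite -(perm_cons x) (perm_trans eqWW') // -cat1s perm_catCA.
rewrite cat_cons -cat_rcons (IH _ _ leR eqW) cat_rcons -catA.
by rewrite prod_move ?size_cat ?(leq_trans leR) ?leq_addl // -catA.
Qed.

End Jump.

End WordProducts.

Section Permute.

Variables (T : eqType) (x0 : T) (n : nat) (s : 'S_n).

Lemma map_nth_enum_ord (l : seq T) : size l = n ->
  [seq nth x0 l i | i : 'I_n <- enum 'I_n] = l.
Proof.
move=> szl; have -> : [seq nth x0 l i | i : 'I_n <- enum 'I_n] = map (nth x0 l) (map val (enum 'I_n)).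
  by rewrite -map_comp.
by rewrite val_enum_ord -szl; exact: mkseq_nth.
Qed.

Definition permute (l : seq T) : seq T := [seq nth x0 l (s i) | i <- enum 'I_n].

Lemma size_permute l : size (permute l) = n.
Proof. by rewrite size_map size_enum_ord. Qed.

Lemma nth_permute l (i : 'I_n) : nth x0 (permute l) i = nth x0 l (s i).
Proof. by rewrite (nth_map i) ?size_enum_ord // nth_ord_enum. Qed.

Lemma permute_set_nth l (i : 'I_n) a : size l = n ->
  permute (set_nth x0 l (s i) a) = set_nth x0 (permute l) i a.
Proof.
move=> szl; apply: (@eq_from_nth _ x0).
  by rewrite size_set_nth !size_permute; apply/esym/maxn_idPr.
move=> k; rewrite size_permute => ltkn.
pose o := Ordinal ltkn; rewrite -[k]/(nat_of_ord o) nth_permute !nth_set_nth /=.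
by rewrite -[k]/(nat_of_ord o) nth_permute !val_eqE (inj_eq perm_inj).
Qed.

Lemma perm_permute l : size l = n -> perm_eq (permute l) l.
Proof.
move=> szl; rewrite -[X in perm_eq _ X](map_nth_enum_ord szl) /permute.
have -> : [seq nth x0 l (s i) | i <- enum 'I_n] =
          [seq nth x0 l i | i : 'I_n <- [seq s i | i <- enum 'I_n]].
  exact: (map_comp (fun i : 'I_n => nth x0 l i) s).
apply: perm_map; apply: uniq_perm => [||i].
- by rewrite (map_inj_uniq perm_inj) enum_uniq.
- exact: enum_uniq.
by rewrite mem_enum; apply/mapP; exists ((s^-1)%g i); rewrite ?mem_enum ?permKV.
Qed.

End Permute.

Local Open Scope ring_scope.

Section QPermIdentity.

Variables (F : fieldType) (A : lmodType F) (mul : A -> A -> A).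
Hypothesis mul_alg : assoc_algebra_mul mul.
Variables (q : F) (n : nat) (s : 'S_n).
Hypothesis qperm_id : satisfies_qperm_id mul q s.
Local Notation prod := (Defs.seqprod 0 mul).

Let mulA : forall x y z, mul x (mul y z) = mul (mul x y) z.
Proof. by case: mul_alg. Qed.

Lemma mul0l z : mul 0 z = 0.
Proof.
case: mul_alg => _ mulDl _; have := mulDl 1 0 0 z.
rewrite !scale1r addr0 => mul0_double.
by apply: (@addrI _ (mul 0 z)); rewrite addr0 -mul0_double.
Qed.

Lemma mulZl a x z : mul (a *: x) z = a *: mul x z.
Proof. by case: mul_alg => _ mulDl _; rewrite -[a *: x]addr0 mulDl mul0l addr0. Qed.

Lemma prod_qperm l : size l = n -> prod l = q *: prod (permute 0 s l).
Proof. by move=> szl; rewrite -{1}(map_nth_enum_ord 0 szl); apply: qperm_id. Qed.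

Variables (i j : 'I_n).
Hypotheses (j_succ_i : j = i.+1 :> nat) (s_j0 : s j = 0%N :> nat).

Lemma prod_jump_qperm y l : size l = n ->
  prod (y :: l) = prod (take (s i).+1 l ++ y :: drop (s i).+1 l).
Proof.
move=> szl; have sz_set (k : 'I_n) a : size (set_nth 0 l k a) = n.
  by rewrite size_set_nth szl; apply/maxn_idPr.
have -> : y :: l = take 0 l ++ y :: drop 0 l by rewrite take0 drop0.
rewrite -[in LHS]prod_set_nth_mull -?[in RHS]prod_set_nth_mulr ?szl // -s_j0 //.
rewrite !(prod_qperm (sz_set _ _)) !permute_set_nth // -!nth_permute.
by rewrite prod_set_nth_mull ?prod_set_nth_mulr ?size_permute // j_succ_i.
Qed.

Hypothesis q_neq1 : q != 1.

Lemma prod_eq0 l : (n + n <= size l)%N -> prod l = 0.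
Proof.
move=> szl; rewrite -(cat_take_drop n l); set W := take n l; set R := drop n l.
have szW : size W = n by rewrite size_takel // (leq_trans _ szl) ?leq_addr.
have szR : (n <= size R)%N by rewrite size_drop leq_subRL ?(leq_trans _ szl) ?leq_addr.
have n_gt0 : (0 < n)%N := leq_ltn_trans (leq0n i) (ltn_ord i).
have ne_size (w : seq A) : (n <= size w)%N -> w != [::].
  by case: w => //=; rewrite leqn0 => /eqP n0; rewrite n0 in n_gt0.
have ne_W := ne_size _ (eq_leq (esym szW)).
have ne_sW := ne_size _ (eq_leq (esym (size_permute 0 s W))).
have ne_R := ne_size _ szR.
have perm_WR : prod (permute 0 s W ++ R) = prod (W ++ R).
  exact: (prod_perm mulA (ltn0Sn _) (ltn_ord (s i)) prod_jump_qperm [::] szR (perm_permute 0 s szW)).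
have fixed : prod (W ++ R) = q *: prod (W ++ R).
  by rewrite [LHS]prod_cat // (prod_qperm szW) mulZl -prod_cat // perm_WR.
apply/eqP; have : (1 - q) *: prod (W ++ R) == 0 by rewrite scalerBl scale1r -fixed subrr.
by rewrite scaler_eq0 subr_eq0 eq_sym (negbTE q_neq1).
Qed.

End QPermIdentity.

Theorem lemma4p2 (F : fieldType) (A : lmodType F) (mul : A -> A -> A)
    (Halg : assoc_algebra_mul mul) (q : F) (hq : q != 1)
    (n : nat) (Hn : (0 < n)%N) (s : 'S_n)
    (Hfirst : forall i : 'I_n, nat_of_ord i = 0%N -> nat_of_ord (s i) <> 0%N)
    (Hlast : forall i : 'I_n, nat_of_ord i = n.-1 -> nat_of_ord (s i) <> n.-1)
    (Hid : satisfies_qperm_id mul q s) :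
  eventually_commutative mul.
Proof.
pose j := (s^-1)%g (Ordinal Hn).
have s_j0 : s j = 0%N :> nat by rewrite permKV.
have j_gt0 : (0 < j)%N by rewrite lt0n; apply/eqP => j0; exact: Hfirst j j0 s_j0.
have lt_pred_j : (j.-1 < n)%N by rewrite (leq_ltn_trans (leq_pred j)).
have j_succ : j = (Ordinal lt_pred_j).+1 :> nat by rewrite /= prednK.
exists (n + n)%N => k le_k t x.
by rewrite /wordprod !(prod_eq0 Halg Hid j_succ s_j0 hq) // size_map size_enum_ord.
Qed.
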